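(* For every integer $n \geq 0$, the following polynomial identity holds in $\mathbb{C}[X]$: $$X^{\underline{n}} = B_n^* + \sum_{k=1}^{n} \frac{n}{k}\, s(n-1,k-1)\, B_k(X).$$
   Context: For $n \geq 0$, $X^{\underline{n}} := X(X-1)\cdots(X-n+1)$ ($X^{\underline{0}}=1$). The (signed) Stirling numbers of the first kind $s(n,k)$ ($0\le k\le n$) are defined by $X^{\underline{n}} = \sum_{k=0}^{n} s(n,k) X^k$ for all $n \ge 0$, with $s(n,k)=0$ when $n<k$. The Bernoulli polynomials $B_n(X)$ are defined by $\frac{t e^{Xt}}{e^t-1} = \sum_{n \ge 0} B_n(X) \frac{t^n}{n!}$. The Bernoulli numbers of the second kind $B_n^*$ are defined by $\frac{t}{\log(1+t)} = \sum_{n \ge 0} B_n^* \frac{t^n}{n!}$ (equivalently $B_n^* = \int_0^1 x^{\underline{n}}\,dx$). *)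

From HB Require Import structures.
From mathcomp Require Import all_boot all_order all_algebra.
Set Implicit Arguments. Unset Strict Implicit. Unset Printing Implicit Defensive.
Import Order.TTheory GRing.Theory Num.Theory.
Local Open Scope ring_scope.

Definition ffpoly (R : nzRingType) (n : nat) : {poly R} :=
  \prod_(i < n) ('X - (i%:R)%:P).

(* Signed Stirling numbers of the first kind: s(n,k) is the coefficient of
   X^k in X^{\underline n} (computed in {poly int}); zero when n < k. *)
Definition stirling1 (n k : nat) : int := (ffpoly int n)`_k.

(* Bernoulli polynomials: the coefficient of t^(m+1) in the defining identity
     t e^{Xt} = (e^t - 1) * \sum_k B_k(X) t^k / k!
   reads  \sum_(k <= m) B_k / (k! (m+1-k)!) = X^m / m!,
   i.e. B_m = X^m - \sum_(k < m) m!/(k! (m+1-k)!) B_k.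
   bern_seq n lists B_0, ..., B_n. *)
Fixpoint bern_seq (F : fieldType) (n : nat) : seq {poly F} :=
  match n with
  | 0 => [:: 1]
  | m.+1 =>
      let s := bern_seq F m in
      rcons s ('X^(m.+1) - \sum_(k < m.+1)
                 ((m.+1)`!%:R / (k`!%:R * (m.+2 - k)`!%:R)) *: s`_k)
  end.

Definition bernoulli_poly (F : fieldType) (n : nat) : {poly F} :=
  (bern_seq F n)`_n.

(* Bernoulli numbers of the second kind: with log(1+t)/t = \sum_j (-1)^j t^j/(j+1),
   the defining identity (\sum_k B*_k t^k/k!) * (log(1+t)/t) = 1 reads
   \sum_(k <= m) B*_k/k! * (-1)^(m-k)/(m-k+1) = [m == 0],
   i.e. B*_0 = 1 and B*_m = - \sum_(k < m) m!/k! * (-1)^(m-k)/(m-k+1) * B*_k. *)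
Fixpoint bern2_seq (F : fieldType) (n : nat) : seq F :=
  match n with
  | 0 => [:: 1]
  | m.+1 =>
      let s := bern2_seq F m in
      rcons s (- \sum_(k < m.+1)
                 ((m.+1)`!%:R / k`!%:R * (-1) ^+ (m.+1 - k) / (m.+2 - k)%:R) * s`_k)
  end.

Definition bernoulli2 (F : fieldType) (n : nat) : F := (bern2_seq F n)`_n.

From HB Require Import structures.
From mathcomp Require Import all_boot all_order all_algebra.
From mathcomp Require Import ring.
Set Implicit Arguments. Unset Strict Implicit. Unset Printing Implicit Defensive.
Import Order.TTheory GRing.Theory Num.Theory.
Local Open Scope ring_scope.

(** The forward difference [fdiff p = p(X+1) - p] and the linear map [antidiff]
    sending [X^n] to [B_{n+1}(X)/(n+1)] are inverse to each other up to
    constants: the identity [\sum_{k<=n} C(n+1,k) B_k = (n+1) X^n] gives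
    [antidiff (fdiff p) = p - \int_0^1 p].  For [p = X^{\underline n}] we have
    [fdiff p = n X^{\underline{n-1}}], whose coefficients are the [n s(n-1,k)].
    It remains to see that [\int_0^1 X^{\underline n} = B*_n].  The weight
    [bern2_weight m k = (-1)^{m-k} / (k! (m+1-k))] is the coefficient of [t^m]
    in [t^k/k! * log(1+t)/t], so the [B*_k] solve the triangular system
    [\sum_k bern2_weight m k * x_k = [m = 0]].  Comparing coefficients of [t^m]
    in [(1+t)^X log(1+t)/t = (d/dX (1+t)^X) / t] gives
    [\sum_k bern2_weight m k * X^{\underline k} = (X^{\underline{m+1}})' / (m+1)!],
    whose integral over [[0,1]] is [[m = 0]] because [X^{\underline{m+1}}]
    vanishes at 0 and, for [m > 0], at 1. *)

Section LincombCoef.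
Variables (R : nzRingType) (V : lmodType R) (w : nat -> V).

Definition lincomb_coef (p : {poly R}) : V := \sum_(i < size p) p`_i *: w i.

Lemma lincomb_coef_widen N (p : {poly R}) :
  (size p <= N)%N -> lincomb_coef p = \sum_(i < N) p`_i *: w i.
Proof.
move=> le_pN; rewrite /lincomb_coef (big_ord_widen N (fun i => p`_i *: w i) le_pN).
rewrite big_mkcond; apply: eq_bigr => i _.
by case: ltnP => // le_p_i; rewrite nth_default ?scale0r.
Qed.

Fact lincomb_coef_is_semilinear : semilinear lincomb_coef.
Proof.
split=> [c p | p q].
  rewrite (lincomb_coef_widen (size_scale_leq c p)) /lincomb_coef scaler_sumr.
  by apply: eq_bigr => i _; rewrite coefZ scalerA.
rewrite (lincomb_coef_widen (size_polyD p q)).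
rewrite (lincomb_coef_widen (leq_maxl (size p) (size q))).
rewrite (lincomb_coef_widen (leq_maxr (size p) (size q))) -big_split.
by apply: eq_bigr => i _; rewrite coefD scalerDl.
Qed.

HB.instance Definition _ :=
  GRing.isSemilinear.Build R {poly R} V _ lincomb_coef lincomb_coef_is_semilinear.

Lemma lincomb_coefXn n : lincomb_coef 'X^n = w n.
Proof.
rewrite /lincomb_coef size_polyXn big_ord_recr /= coefXn eqxx scale1r.
by rewrite big1 ?add0r // => i _; rewrite coefXn ltn_eqF ?scale0r.
Qed.

End LincombCoef.

Arguments lincomb_coef {R V} w p : simpl never.

Section ForwardDifference.
Variable R : comNzRingType.
Implicit Types p q : {poly R}.

Definition fdiff p : {poly R} := p \Po ('X + 1) - p.

Fact fdiff_is_semilinear : semilinear fdiff.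
Proof.
split=> [c p | p q]; rewrite /fdiff; first by rewrite comp_polyZ scalerBr.
by rewrite comp_polyD opprD addrACA.
Qed.

HB.instance Definition _ :=
  GRing.isSemilinear.Build R {poly R} {poly R} _ fdiff fdiff_is_semilinear.

Lemma fdiffZ c p : fdiff (c *: p) = c *: fdiff p.
Proof. exact: linearZ. Qed.

Lemma fdiffC c : fdiff c%:P = 0.
Proof. by rewrite /fdiff comp_polyC subrr. Qed.

Lemma fdiffXn n : fdiff 'X^n = \sum_(i < n) 'C(n, i)%:R *: 'X^i.
Proof.
rewrite /fdiff comp_Xn_poly exprD1n big_ord_recr /= binn mulr1n addrK.
by apply: eq_bigr => i _; rewrite scaler_nat.
Qed.

Lemma fdiff_deriv p : fdiff p^`() = (fdiff p)^`().
Proof. by rewrite /fdiff derivB deriv_comp derivD derivX derivC addr0 mulr1. Qed.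

End ForwardDifference.

Section FallingFactorial.
Variable R : nzRingType.

Lemma ffpoly0 : ffpoly R 0 = 1.
Proof. by rewrite /ffpoly big_ord0. Qed.

Lemma ffpolyS n : ffpoly R n.+1 = ffpoly R n * ('X - n%:R%:P).
Proof. by rewrite /ffpoly big_ord_recr. Qed.

Lemma size_ffpoly n : (size (ffpoly R n) <= n.+1)%N.
Proof.
elim: n => [|n IHn]; first by rewrite ffpoly0 size_poly1.
rewrite ffpolyS (leq_trans (size_polyMleq _ _)) //.
by rewrite size_XsubC addn2.
Qed.

Lemma coef_ffpoly n i : (ffpoly R n)`_i = (stirling1 n i)%:~R.
Proof.
have -> : ffpoly R n = map_poly intr (ffpoly int n).
  rewrite /ffpoly rmorph_prod; apply: eq_bigr => j _.
  by rewrite /= map_polyXsubC; congr (_ - _%:P); rewrite rmorph_nat.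
by rewrite coef_map.
Qed.

End FallingFactorial.

Section ComFallingFactorial.
Variable R : comNzRingType.

Lemma ffpoly_shift n : ffpoly R n.+1 \Po ('X + 1) = ('X + 1) * ffpoly R n.
Proof.
elim: n => [|n IHn].
  by rewrite ffpolyS ffpoly0 mul1r comp_polyB comp_polyX comp_polyC subr0 mulr1.
rewrite ffpolyS comp_polyM IHn comp_polyB comp_polyX comp_polyC ffpolyS mulrA.
by rewrite -addrA -opprB -polyCB -natr1 addrK.
Qed.

Lemma fdiff_ffpoly n : fdiff (ffpoly R n.+1) = n.+1%:R *: ffpoly R n.
Proof.
by rewrite /fdiff ffpoly_shift ffpolyS -mul_polyC -natr1 polyCD polyC1; ring.
Qed.

Lemma horner_ffpoly_nat n k : (k < n)%N -> (ffpoly R n).[k%:R] = 0.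
Proof.
move=> lt_kn; rewrite /ffpoly horner_prod (bigD1 (Ordinal lt_kn)) //=.
by rewrite hornerXsubC subrr mul0r.
Qed.

Lemma deriv_ffpoly_at0 n : (ffpoly R n.+1)^`().[0] = (-1) ^+ n * n`!%:R.
Proof.
elim: n => [|n IHn].
  by rewrite ffpolyS ffpoly0 mul1r derivXsubC hornerC expr0 mulr1.
rewrite ffpolyS derivM derivXsubC mulr1 hornerD hornerM hornerXsubC sub0r.
rewrite IHn (horner_ffpoly_nat (ltn0Sn n)) addr0 factS natrM exprS; ring.
Qed.

End ComFallingFactorial.

Lemma triangular_uniq (R : idomainType) (w : nat -> nat -> R) (a b : nat -> R) :
    (forall m, w m m != 0) ->
    (forall m, \sum_(k < m.+1) w m k * a k = \sum_(k < m.+1) w m k * b k) ->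
  a =1 b.
Proof.
move=> w_diag eq_ab; elim/ltn_ind=> m IHm.
have := eq_ab m; rewrite !big_ord_recr /=.
rewrite (eq_bigr (fun k : 'I_m => w m k * b k)) => [/addrI|k _]; last by rewrite IHm.
exact: mulfI.
Qed.

Section CharZero.
Variables (F : fieldType) (F0 : has_pchar0 F).
Implicit Types p q : {poly F}.

Lemma natf_eq0 n : (n%:R == 0 :> F) = (n == 0)%N.
Proof. exact: (pcharf0P F).1. Qed.

Lemma natrS_neq0 n : (n.+1%:R : F) != 0.
Proof. by rewrite natf_eq0. Qed.

Lemma natr_fact_neq0 n : (n`!%:R : F) != 0.
Proof. by rewrite natf_eq0 -lt0n fact_gt0. Qed.

Lemma natr_inj : injective (GRing.natmul (1 : F)).
Proof.
move=> m n; wlog le_mn : m n / (m <= n)%N => [hwlog eq_mn|eq_mn].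
  by case/orP: (leq_total m n) => /hwlog hyp; [exact: hyp | exact/esym/hyp/esym].
apply/eqP; rewrite eqn_leq le_mn /= -subn_eq0 -natf_eq0.
by rewrite natrB // eq_mn subrr.
Qed.

Lemma fdiff_eq0 q : fdiff q = 0 -> q = q.[0]%:P.
Proof.
move=> /subr0_eq q_periodic.
have q_nat k : q.[k%:R] = q.[0].
  elim: k => [//|k IHk].
  by rewrite -IHk -[in RHS]q_periodic horner_comp !hornerE -mulrSr.
apply/eqP; rewrite -subr_eq0; apply/negPn/negP => nz_r.
have r_roots : all (root (q - q.[0]%:P)) (mkseq (GRing.natmul 1) (size (q - q.[0]%:P))).
  by apply/allP => _ /mapP[k _ ->]; rewrite rootE hornerD hornerN hornerC q_nat subrr.
have := max_poly_roots nz_r r_roots (mkseq_uniq _ natr_inj).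
by rewrite size_mkseq ltnn.
Qed.

Lemma eq_poly_fdiff p q : fdiff p = fdiff q -> p.[0] = q.[0] -> p = q.
Proof.
move=> eq_fdiff eq_at0; apply/eqP; rewrite -subr_eq0; apply/eqP.
have /fdiff_eq0 -> : fdiff (p - q) = 0 by rewrite raddfB /= eq_fdiff subrr.
by rewrite hornerD hornerN eq_at0 subrr.
Qed.

Lemma size_bern_seq n : size (bern_seq F n) = n.+1.
Proof. by elim: n => // n IHn; rewrite /= size_rcons IHn. Qed.

Lemma nth_bern_seq n k : (k <= n)%N -> (bern_seq F n)`_k = bernoulli_poly F k.
Proof.
elim: n => [|n IHn]; first by rewrite leqn0 => /eqP ->.
rewrite leq_eqVlt => /predU1P[-> //|lt_kn].
by rewrite /= nth_rcons size_bern_seq lt_kn IHn.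
Qed.

Lemma bernoulli_poly0 : bernoulli_poly F 0 = 1.
Proof. by []. Qed.

Lemma bernoulli_polyS n : bernoulli_poly F n.+1 = 'X^(n.+1) -
  \sum_(k < n.+1) ((n.+1)`!%:R / (k`!%:R * (n.+2 - k)`!%:R)) *: bernoulli_poly F k.
Proof.
rewrite /bernoulli_poly /= nth_rcons size_bern_seq ltnn eqxx.
by congr (_ - _); apply: eq_bigr => k _; rewrite nth_bern_seq // -ltnS.
Qed.

Lemma sum_bernoulli_poly n :
  \sum_(k < n.+1) 'C(n.+1, k)%:R *: bernoulli_poly F k = n.+1%:R *: 'X^n.
Proof.
case: n => [|n]; first by rewrite big_ord1 bin0 expr0.
rewrite big_ord_recr /= binSn bernoulli_polyS scalerBr scaler_sumr addrC.
rewrite [X in _ - X](eq_bigr (fun k : 'I_n.+1 => 'C(n.+2, k)%:R *: bernoulli_poly F k)).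
  by rewrite subrK.
move=> k _; rewrite scalerA; congr (_ *: _).
have binE : 'C(n.+2, k)%:R * (k`!%:R * (n.+2 - k)`!%:R) = n.+2%:R * (n.+1)`!%:R :> F.
  by rewrite -!natrM bin_fact // leqW // ltnW.
by rewrite mulrA -binE mulfK // mulf_neq0 ?natr_fact_neq0.
Qed.

Definition integral01 : {poly F} -> F^o := lincomb_coef (fun i => ((i.+1%:R)^-1 : F^o)).
HB.instance Definition _ := GRing.Linear.on integral01.

Definition antidiff : {poly F} -> {poly F} :=
  lincomb_coef (fun i => (i.+1%:R)^-1 *: bernoulli_poly F i.+1).
HB.instance Definition _ := GRing.Linear.on antidiff.

Lemma integral01Xn n : integral01 'X^n = (n.+1%:R)^-1.
Proof. exact: lincomb_coefXn. Qed.

Lemma integral01_deriv p : integral01 p^`() = p.[1] - p.[0].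
Proof.
have le_p'p : (size p^`() <= size p)%N.
  by have [->|/lt_size_deriv/ltnW //] := eqVneq p 0; rewrite deriv0.
rewrite /integral01 (lincomb_coef_widen _ le_p'p) (horner_coef_wide _ (leqnSn _)).
rewrite big_ord_recl horner_coef0 expr0 mulr1 addrAC subrr add0r.
apply: eq_bigr => i _; rewrite coef_deriv /= expr1n mulr1 -(mulr_natr p`_i.+1).
by rewrite -[LHS]/(p`_i.+1 * i.+1%:R / i.+1%:R) mulfK ?natrS_neq0.
Qed.

Lemma antidiffXn n : antidiff 'X^n = (n.+1%:R)^-1 *: bernoulli_poly F n.+1.
Proof. exact: lincomb_coefXn. Qed.

Lemma antidiff_fdiffXn n : antidiff (fdiff 'X^n) = 'X^n - ((n.+1%:R)^-1)%:P.
Proof.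
have sumB := sum_bernoulli_poly n; rewrite big_ord_recl bin0 scale1r in sumB.
rewrite fdiffXn raddf_sum /= (eq_bigr (fun i : 'I_n => (n.+1%:R)^-1 *:
  ('C(n.+1, i.+1)%:R *: bernoulli_poly F i.+1))) => [|i _].
  rewrite -scaler_sumr -(addKr (bernoulli_poly F 0) (\sum_(i < n) _)) sumB.
  rewrite scalerDr scalerA mulVf ?natrS_neq0 // scale1r addrC scalerN.
  by rewrite bernoulli_poly0 -alg_polyC.
rewrite [antidiff _]linearZ /= antidiffXn !scalerA; congr (_ *: _).
have binE : n.+1%:R * 'C(n, i)%:R = i.+1%:R * 'C(n.+1, i.+1)%:R :> F.
  by rewrite -!natrM mul_bin_diag.
rewrite -[X in _ = _ * X](mulKf (natrS_neq0 i)) -binE.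
by field; rewrite !nat1r !natrS_neq0.
Qed.

Lemma antidiff_fdiff p : antidiff (fdiff p) = p - (integral01 p)%:P.
Proof.
rewrite -[p]coefK poly_def [integral01 _]raddf_sum !raddf_sum /= -big_split.
apply: eq_bigr => i _.
by rewrite !linearZ /= antidiff_fdiffXn integral01Xn scalerBr scale_polyC.
Qed.

Definition bern2_weight (m k : nat) : F := (-1) ^+ (m - k) / (k`!%:R * (m.+1 - k)%:R).

Lemma bern2_weight_diag m : bern2_weight m m != 0.
Proof.
rewrite /bern2_weight subnn subSnn expr0 mulr1 mul1r invr_eq0.
exact: natr_fact_neq0.
Qed.

Lemma bern2_weightS m k : (k <= m)%N ->
  bern2_weight m.+1 k.+1 * k.+1%:R = bern2_weight m k.
Proof.
move=> le_km; rewrite /bern2_weight !subSS (factS k) natrM subSn //.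
by field; rewrite !nat1r !natrS_neq0 natr_fact_neq0.
Qed.

Lemma sum_bern2_weight_ffpoly m :
  \sum_(k < m.+1) bern2_weight m k *: ffpoly F k =
  ((m.+1)`!%:R)^-1 *: (ffpoly F m.+1)^`().
Proof.
elim: m => [|m IHm].
  rewrite big_ord1 ffpolyS ffpoly0 mul1r derivXsubC; congr (_%:A).
  by rewrite /bern2_weight /= expr0 !mulr1 mul1r.
apply: eq_poly_fdiff.
  rewrite raddf_sum big_ord_recl /= ffpoly0 -polyC1 fdiffZ fdiffC scaler0 add0r.
  rewrite (eq_bigr (fun k : 'I_m.+1 => bern2_weight m k *: ffpoly F k)) => [|k _].
    rewrite IHm fdiffZ fdiff_deriv fdiff_ffpoly derivZ scalerA; congr (_ *: _).
    by rewrite (factS m.+1) natrM invfM mulrAC mulVf ?mul1r ?natrS_neq0.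
  by rewrite fdiffZ fdiff_ffpoly scalerA bern2_weightS // -ltnS.
rewrite horner_sum big_ord_recl big1 => [|k _]; last first.
  by rewrite hornerZ (horner_ffpoly_nat _ (ltn0Sn k)) mulr0.
rewrite addr0 !hornerZ deriv_ffpoly_at0 ffpoly0 -polyC1 hornerC mulr1.
rewrite /bern2_weight !subn0 fact0 mul1r (factS m.+1) natrM.
by field; rewrite -natrD natr_fact_neq0 natf_eq0.
Qed.

Lemma sum_bern2_weight_integral01 m :
  \sum_(k < m.+1) bern2_weight m k * integral01 (ffpoly F k) = (m == 0)%:R.
Proof.
transitivity (integral01 (\sum_(k < m.+1) bern2_weight m k *: ffpoly F k)).
  by rewrite raddf_sum /=; apply: eq_bigr => k _; rewrite linearZ.
rewrite sum_bern2_weight_ffpoly linearZ /= integral01_deriv.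
rewrite (horner_ffpoly_nat _ (ltn0Sn m)) subr0.
case: m => [|m]; last by rewrite (@horner_ffpoly_nat _ m.+2 1) ?scaler0.
by rewrite ffpolyS ffpoly0 mul1r hornerXsubC subr0 /= invr1 scale1r.
Qed.

Lemma size_bern2_seq n : size (bern2_seq F n) = n.+1.
Proof. by elim: n => // n IHn; rewrite /= size_rcons IHn. Qed.

Lemma nth_bern2_seq n k : (k <= n)%N -> (bern2_seq F n)`_k = bernoulli2 F k.
Proof.
elim: n => [|n IHn]; first by rewrite leqn0 => /eqP ->.
rewrite leq_eqVlt => /predU1P[-> //|lt_kn].
by rewrite /= nth_rcons size_bern2_seq lt_kn IHn.
Qed.

Lemma bernoulli2S n : bernoulli2 F n.+1 = - \sum_(k < n.+1)
  ((n.+1)`!%:R / k`!%:R * (-1) ^+ (n.+1 - k) / (n.+2 - k)%:R) * bernoulli2 F k.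
Proof.
rewrite /bernoulli2 /= nth_rcons size_bern2_seq ltnn eqxx.
by congr (- _); apply: eq_bigr => k _; rewrite nth_bern2_seq // -ltnS.
Qed.

Lemma sum_bern2_weight_bernoulli2 m :
  \sum_(k < m.+1) bern2_weight m k * bernoulli2 F k = (m == 0)%:R.
Proof.
case: m => [|m].
  by rewrite big_ord1 /bern2_weight subnn subn0 fact0 expr0 mulr1n mulr1 divr1 mul1r.
rewrite big_ord_recr /= bernoulli2S mulrN mulr_sumr.
rewrite [X in _ - X](eq_bigr (fun k : 'I_m.+1 => bern2_weight m.+1 k * bernoulli2 F k)).
  by rewrite subrr.
move=> k _; rewrite mulrA; congr (_ * _).
rewrite /bern2_weight subnn subSnn expr0 mulr1 mul1r (subSn (ltnW (ltn_ord k))).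
by field; rewrite nat1r !(natrS_neq0, natr_fact_neq0).
Qed.

Lemma integral01_ffpoly n : integral01 (ffpoly F n) = bernoulli2 F n.
Proof.
apply: (triangular_uniq (w := bern2_weight) (a := fun k => integral01 (ffpoly F k))).
  exact: bern2_weight_diag.
by move=> m; rewrite sum_bern2_weight_integral01 sum_bern2_weight_bernoulli2.
Qed.

End CharZero.

Theorem theorem3 (F : numFieldType) (n : nat) :
  ffpoly F n =
    (bernoulli2 F n)%:P +
    \sum_(1 <= k < n.+1)
      ((n%:R / k%:R) * (stirling1 n.-1 k.-1)%:~R) *: bernoulli_poly F k.
Proof.
have F0 : has_pchar0 F := pchar_num F.
rewrite -(integral01_ffpoly F0) -[LHS](subrK (integral01 (ffpoly F n))%:P).
rewrite -(antidiff_fdiff F0) addrC; congr (_ + _).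
case: n => [|n]; first by rewrite ffpoly0 -polyC1 fdiffC raddf0 big_geq.
rewrite fdiff_ffpoly linearZ /= /antidiff (lincomb_coef_widen _ (size_ffpoly F n)).
rewrite big_add1 /= big_mkord scaler_sumr.
by apply: eq_bigr => i _; rewrite coef_ffpoly !scalerA mulrAC.
Qed.
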